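(* Let $n,p$ be positive integers, $X\in\mathbb{R}^{n\times p}$, $\mathbf y\in\mathbb{R}^n$ and $\delta>0$. For any $j\in\{1,\dots,p\}$, if the coordinates $t_i$, $i\neq j$, of $\mathbf t\in[0,1)^p$ are held fixed, then \[ \lim_{t_j\downarrow 0}\boldsymbol\zeta_{\mathbf t}(j)=0, \] where $\boldsymbol\zeta_{\mathbf t}(j)$ denotes the $j$-th component of $\boldsymbol\zeta_{\mathbf t}$.
   Context: For $\mathbf t\in[0,1)^p$, $T_{\mathbf t}=\mathrm{Diag}(t_1,\dots,t_p)$, $X_{\mathbf t}=XT_{\mathbf t}$, $L_{\mathbf t}=\frac1n[X_{\mathbf t}^\top X_{\mathbf t}+\delta(I-T_{\mathbf t}^2)]$ (invertible for such $\mathbf t$) with $I$ the $p\times p$ identity, $\widetilde{\boldsymbol\beta}_{\mathbf t}=L_{\mathbf t}^{-1}(X_{\mathbf t}^\top\mathbf y/n)$, and $\odot$ denotes the element-wise product. Define $\mathbf a_{\mathbf t}=\frac{X^\top X}{n}(\mathbf t\odot\widetilde{\boldsymbol\beta}_{\mathbf t})-\frac{X^\top\mathbf y}{n}$, $\mathbf b_{\mathbf t}=\mathbf a_{\mathbf t}-\frac{\delta}{n}(\mathbf t\odot\widetilde{\boldsymbol\beta}_{\mathbf t})$, $\mathbf c_{\mathbf t}=L_{\mathbf t}^{-1}(\mathbf t\odot\mathbf a_{\mathbf t})$, $\mathbf d_{\mathbf t}=\left(\frac{X^\top X}{n}-\frac{\delta}{n}I\right)(\mathbf t\odot\mathbf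 c_{\mathbf t})$, and $\boldsymbol\zeta_{\mathbf t}=2(\widetilde{\boldsymbol\beta}_{\mathbf t}\odot(\mathbf a_{\mathbf t}-\mathbf d_{\mathbf t}))-2(\mathbf b_{\mathbf t}\odot\mathbf c_{\mathbf t})$. *)

From HB Require Import structures.
From mathcomp Require Import all_boot all_order all_algebra.
From mathcomp Require Import all_classical all_reals all_analysis.
Set Implicit Arguments. Unset Strict Implicit. Unset Printing Implicit Defensive.
Import Order.TTheory GRing.Theory Num.Theory.
Local Open Scope ring_scope.

Section Defs.
Variables (R : realType) (n p : nat).
Variables (X : 'M[R]_(n, p)) (y : 'cV[R]_n) (delta : R).

Definition hadamard (u v : 'cV[R]_p) : 'cV[R]_p := \col_i (u i 0 * v i 0).

Definition Tmat (t : 'cV[R]_p) : 'M[R]_p := diag_mx t^T.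
Definition Xt (t : 'cV[R]_p) : 'M[R]_(n, p) := X *m Tmat t.
Definition Lt (t : 'cV[R]_p) : 'M[R]_p :=
  n%:R^-1 *: ((Xt t)^T *m Xt t + delta *: (1%:M - Tmat t *m Tmat t)).
Definition betat (t : 'cV[R]_p) : 'cV[R]_p :=
  invmx (Lt t) *m (n%:R^-1 *: ((Xt t)^T *m y)).
Definition at_ (t : 'cV[R]_p) : 'cV[R]_p :=
  n%:R^-1 *: (X^T *m X) *m hadamard t (betat t) - n%:R^-1 *: (X^T *m y).
Definition bt (t : 'cV[R]_p) : 'cV[R]_p :=
  at_ t - (delta / n%:R) *: hadamard t (betat t).
Definition ct (t : 'cV[R]_p) : 'cV[R]_p := invmx (Lt t) *m hadamard t (at_ t).
Definition dt (t : 'cV[R]_p) : 'cV[R]_p :=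
  (n%:R^-1 *: (X^T *m X) - (delta / n%:R) *: 1%:M) *m hadamard t (ct t).
Definition zetat (t : 'cV[R]_p) : 'cV[R]_p :=
  2%:R *: hadamard (betat t) (at_ t - dt t) - 2%:R *: hadamard (bt t) (ct t).
End Defs.

Definition set_coord (R : realType) (p : nat) (t : 'cV[R]_p) (j : 'I_p) (s : R)
  : 'cV[R]_p := \col_i (if i == j then s else t i 0).

From HB Require Import structures.
From mathcomp Require Import all_boot all_order all_algebra.
From mathcomp Require Import all_classical all_reals all_analysis.
From mathcomp Require Import lra.
Set Implicit Arguments. Unset Strict Implicit. Unset Printing Implicit Defensive.
Import Order.TTheory GRing.Theory Num.Theory.
Import numFieldNormedType.Exports.
Local Open Scope classical_set_scope.
Local Open Scope ring_scope.

(* When t_j = 0 the j-th column of X_t vanishes, so the j-th row of L_t is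
   (delta/n) e_j and the j-th row of L_t^-1 is (n/delta) e_j. Hence beta_t(j) and c_t(j) are multiples of (X_t^T y)(j) = 0 and
   of t_j a_t(j) = 0, and zeta_t(j) = 0. Moreover
   L_t = (X_t^T X_t + delta diag(1 - t_i^2)) / n is positive definite on
   [0,1)^p, so by the adjugate formula t |-> L_t^-1, and with it every
   ingredient of zeta_t, is continuous there: letting t_j decrease to 0
   gives the limit zeta_t(j) = 0. *)

Section entrywise_limits.
Context {K : numFieldType} {T : Type} (F : set_system T) {FF : Filter F}.

Definition mx_cvg {m k} (M : T -> 'M[K]_(m, k)) (L : 'M[K]_(m, k)) :=
  forall i l, M x i l @[x --> F] --> L i l.

Lemma cvg_sumr (I : Type) (r : seq I) (P : pred I) (f : I -> T -> K) (a : I -> K) :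
  (forall i, f i x @[x --> F] --> a i) ->
  \sum_(i <- r | P i) f i x @[x --> F] --> \sum_(i <- r | P i) a i.
Proof. by move=> fa; apply: (cvg_big add_continuous) => // i _; exact: fa. Qed.

Lemma cvg_prodr (I : Type) (r : seq I) (P : pred I) (f : I -> T -> K) (a : I -> K) :
  (forall i, f i x @[x --> F] --> a i) ->
  \prod_(i <- r | P i) f i x @[x --> F] --> \prod_(i <- r | P i) a i.
Proof. by move=> fa; apply: (cvg_big mul_continuous) => // i _; exact: fa. Qed.

Section fixed_size.
Variables (m k : nat).
Implicit Types (M N : T -> 'M[K]_(m, k)) (A B : 'M[K]_(m, k)).

Lemma mx_cvg_cst A : mx_cvg (fun=> A) A.
Proof. by move=> i l; exact: cvg_cst. Qed.

Lemma mx_cvgD M N A B : mx_cvg M A -> mx_cvg N B -> mx_cvg (fun x => M x + N x) (A + B).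
Proof. by move=> MA NB i l; rewrite mxE; under eq_cvg do rewrite mxE; exact: cvgD. Qed.

Lemma mx_cvgN M A : mx_cvg M A -> mx_cvg (fun x => - M x) (- A).
Proof. by move=> MA i l; rewrite mxE; under eq_cvg do rewrite mxE; exact: cvgN. Qed.

Lemma mx_cvgB M N A B : mx_cvg M A -> mx_cvg N B -> mx_cvg (fun x => M x - N x) (A - B).
Proof. by move=> MA NB; apply: mx_cvgD => //; exact: mx_cvgN. Qed.

Lemma mx_cvgZ c M A : mx_cvg M A -> mx_cvg (fun x => c *: M x) (c *: A).
Proof.
by move=> MA i l; rewrite mxE; under eq_cvg do rewrite mxE; exact: (cvgM (cvg_cst c)).
Qed.

Lemma mx_cvg_trmx M A : mx_cvg M A -> mx_cvg (fun x => (M x)^T) A^T.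
Proof. by move=> MA i l; rewrite mxE; under eq_cvg do rewrite mxE; exact: MA. Qed.

End fixed_size.

Lemma mx_cvgM m k l (M : T -> 'M[K]_(m, k)) (N : T -> 'M[K]_(k, l)) A B :
  mx_cvg M A -> mx_cvg N B -> mx_cvg (fun x => M x *m N x) (A *m B).
Proof.
move=> MA NB i h; rewrite mxE; under eq_cvg do rewrite mxE.
by apply: cvg_sumr => r; exact: cvgM.
Qed.

Lemma mx_cvg_diag m (d : T -> 'rV[K]_m) (e : 'rV[K]_m) :
  mx_cvg d e -> mx_cvg (fun x => diag_mx (d x)) (diag_mx e).
Proof.
move=> de i l; rewrite mxE; under eq_cvg do rewrite mxE.
by case: (i == l); [exact: de | exact: cvg_cst].
Qed.

Lemma cvg_det m (M : T -> 'M[K]_m) A :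
  mx_cvg M A -> \det (M x) @[x --> F] --> \det A.
Proof.
move=> MA; apply: cvg_sumr => s; apply: cvgM; first exact: cvg_cst.
by apply: cvg_prodr => i; exact: MA.
Qed.

Lemma mx_cvg_adj m (M : T -> 'M[K]_m) A :
  mx_cvg M A -> mx_cvg (fun x => \adj (M x)) (\adj A).
Proof.
move=> MA i l; rewrite !mxE; under eq_cvg do rewrite !mxE.
apply: cvgM; first exact: cvg_cst.
by apply: cvg_det => a b; rewrite !mxE; under eq_cvg do rewrite !mxE; exact: MA.
Qed.

Lemma mx_cvg_invmx m (M : T -> 'M[K]_m) A :
  A \in unitmx -> mx_cvg M A -> mx_cvg (fun x => invmx (M x)) (invmx A).
Proof.
move=> A_unit MA.
have detA_neq0 : \det A != 0 by rewrite -unitfE -unitmxE.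
have M_unit : \forall x \near F, M x \in unitmx.
  near=> x; rewrite unitmxE unitfE; near: x.
  exact: cvgr_neq0 _ (cvg_det MA) detA_neq0.
move=> i l.
have adj_formula : {near F, (fun x => ((\det (M x))^-1 *: \adj (M x)) i l) =1
                            (fun x => invmx (M x) i l)}.
  by near=> x; rewrite /invmx (near M_unit x).
apply: cvg_trans (near_eq_cvg adj_formula) _.
rewrite /invmx A_unit mxE; under eq_cvg do rewrite mxE.
by apply: cvgM; [exact: cvgV detA_neq0 (cvg_det MA) | exact: mx_cvg_adj].
Unshelve. all: by end_near.
Qed.

End entrywise_limits.

Lemma mx_cvg_hadamard {R : realType} {T : Type} (F : set_system T) {FF : Filter F}
    m (u v : T -> 'cV[R]_m) (a b : 'cV[R]_m) :
  mx_cvg F u a -> mx_cvg F v b ->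
  mx_cvg F (fun x => hadamard (u x) (v x)) (hadamard a b).
Proof. by move=> ua vb i l; rewrite mxE; under eq_cvg do rewrite mxE; exact: cvgM. Qed.

Lemma unitmx_gram_add_diag (R : realFieldType) n p (A : 'M[R]_(n, p)) (d : 'rV[R]_p) :
  (forall i, 0 < d 0 i) -> A^T *m A + diag_mx d \in unitmx.
Proof.
move=> d_gt0; rewrite unitmxE unitfE; apply/negP => /det0P [v v_neq0 v_ker].
set w := v *m A^T.
have quad0 : \sum_k w 0 k ^+ 2 + \sum_i d 0 i * v 0 i ^+ 2 = 0.
  transitivity ((v *m (A^T *m A + diag_mx d) *m v^T) 0 0); last first.
    by rewrite v_ker mul0mx mxE.
  rewrite mulmxDr mulmxDl mulmxA -[v *m A^T *m A *m v^T]mulmxA.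
  rewrite -[A *m v^T]trmxK trmx_mul trmxK -/w mul_mx_diag !mxE.
  congr (_ + _); apply: eq_bigr => k _; rewrite !mxE expr2 //.
  by rewrite mulrCA mulrA.
have terms_ge0 : forall i, 0 <= d 0 i * v 0 i ^+ 2.
  by move=> i; rewrite mulr_ge0 ?sqr_ge0 ?ltW.
have diag_sum0 : \sum_i d 0 i * v 0 i ^+ 2 = 0.
  apply/eqP; rewrite eq_le sumr_ge0 // andbT.
  rewrite -(lerD2l (\sum_k w 0 k ^+ 2)) quad0 addr0.
  by rewrite sumr_ge0 // => k _; rewrite sqr_ge0.
move/eqP: v_neq0; apply; apply/rowP => i; rewrite mxE.
have /(_ i isT)/eqP := psumr_eq0P (fun i _ => terms_ge0 i) diag_sum0.
by rewrite mulf_eq0 (gt_eqF (d_gt0 i)) sqrf_eq0 => /eqP.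
Qed.

Lemma row_invmx_scalar (F : fieldType) p (L : 'M[F]_p) (j : 'I_p) (c : F) :
  L \in unitmx -> row j L = c *: row j 1%:M -> row j (invmx L) = c^-1 *: row j 1%:M.
Proof.
move=> L_unit rowL.
have rowLV : c *: row j (invmx L) = row j 1%:M.
  by rewrite -(mulmxV L_unit) row_mul rowL -scalemxAl -row_mul mul1mx.
have c_neq0 : c != 0.
  apply: contra_eqN rowLV => /eqP ->; rewrite scale0r.
  by apply/eqP => /rowP /(_ j); rewrite !mxE eqxx => /esym/eqP; rewrite oner_eq0.
by rewrite -rowLV scalerA mulVf // scale1r.
Qed.

Section ridge.
Variables (R : realType) (n p : nat) (X : 'M[R]_(n, p)) (y : 'cV[R]_n) (delta : R).
Implicit Types (t : 'cV[R]_p).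

Lemma Lt_gram_diagE t :
  Lt X delta t = n%:R^-1 *:
    ((Xt X t)^T *m Xt X t + diag_mx (\row_i (delta * (1 - t i 0 ^+ 2)))).
Proof.
congr (_ *: (_ + _)); apply/matrixP => i l.
rewrite /Tmat mul_diag_mx !mxE.
by case: (i == l); rewrite /= ?(mulr1n, mulr0n, expr2, subrr, mulr0).
Qed.

Lemma Lt_unit t : (0 < n)%N -> 0 < delta -> (forall i, 0 <= t i 0 < 1) ->
  Lt X delta t \in unitmx.
Proof.
move=> n_gt0 delta_gt0 t01; rewrite Lt_gram_diagE unitmxZ.
  apply: unitmx_gram_add_diag => i; rewrite mxE; have /andP [t_ge0 t_lt1] := t01 i.
  by rewrite mulr_gt0 // subr_gt0 expr2; nra.
by rewrite unitfE invr_eq0 pnatr_eq0 -lt0n.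
Qed.

Section vanishing_coordinate.
Variables (t : 'cV[R]_p) (j : 'I_p).
Hypotheses (tj0 : t j 0 = 0) (Lt_unit_t : Lt X delta t \in unitmx).

Lemma trXt_mul_coord0 k (M : 'M[R]_(n, k)) l : ((Xt X t)^T *m M) j l = 0.
Proof.
rewrite mxE big1 // => i _.
by rewrite /Xt /Tmat mul_mx_diag !mxE tj0 mulr0 mul0r.
Qed.

Lemma row_Lt_coord0 : row j (Lt X delta t) = (n%:R^-1 * delta) *: row j 1%:M.
Proof.
apply/rowP => l; rewrite /Lt 3!mxE trXt_mul_coord0 add0r.
by rewrite /Tmat mul_diag_mx !mxE tj0 mul0r subr0 mulrA.
Qed.

Lemma invLt_mul_coord0 (w : 'cV[R]_p) :
  w j 0 = 0 -> (invmx (Lt X delta t) *m w) j 0 = 0.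
Proof.
move=> wj0; set M := invmx _ *m w.
have -> : M j 0 = row j M 0 0 by rewrite [RHS]mxE.
rewrite row_mul (row_invmx_scalar Lt_unit_t row_Lt_coord0) -scalemxAl -row_mul.
by rewrite mul1mx !mxE wj0 mulr0.
Qed.

Lemma betat_coord0 : betat X y delta t j 0 = 0.
Proof.
apply: invLt_mul_coord0.
by rewrite mxE trXt_mul_coord0 mulr0.
Qed.

Lemma ct_coord0 : ct X y delta t j 0 = 0.
Proof. by apply: invLt_mul_coord0; rewrite mxE tj0 mul0r. Qed.

Lemma zetat_coord0 : zetat X y delta t j 0 = 0.
Proof.
rewrite /zetat; move: betat_coord0 ct_coord0.
move: (betat X y delta t) (ct X y delta t) => b c bj0 cj0.
by rewrite !mxE bj0 cj0 !(mul0r, mulr0) subr0.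
Qed.

End vanishing_coordinate.

Lemma zetat_cvg (T : Type) (F : set_system T) {FF : Filter F}
    (u : T -> 'cV[R]_p) t :
  Lt X delta t \in unitmx -> mx_cvg F u t ->
  mx_cvg F (fun x => zetat X y delta (u x)) (zetat X y delta t).
Proof.
move=> Lt_unit_t ut.
have T_cvg : mx_cvg F (fun x => Tmat (u x)) (Tmat t).
  by apply: mx_cvg_diag; exact: mx_cvg_trmx.
have Xt_cvg : mx_cvg F (fun x => Xt X (u x)) (Xt X t).
  by apply: mx_cvgM _ T_cvg; exact: mx_cvg_cst.
have Lt_cvg : mx_cvg F (fun x => Lt X delta (u x)) (Lt X delta t).
  apply: mx_cvgZ; apply: mx_cvgD; first exact: mx_cvgM (mx_cvg_trmx Xt_cvg) Xt_cvg.
  by apply: mx_cvgZ; apply: mx_cvgB; [exact: mx_cvg_cst | exact: mx_cvgM].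
have invLt_cvg : mx_cvg F (fun x => invmx (Lt X delta (u x))) (invmx (Lt X delta t)).
  exact: mx_cvg_invmx.
have beta_cvg : mx_cvg F (fun x => betat X y delta (u x)) (betat X y delta t).
  apply: mx_cvgM invLt_cvg _; apply: mx_cvgZ.
  by apply: mx_cvgM (mx_cvg_trmx Xt_cvg) _; exact: mx_cvg_cst.
have tbeta_cvg : mx_cvg F (fun x => hadamard (u x) (betat X y delta (u x)))
                          (hadamard t (betat X y delta t)).
  exact: mx_cvg_hadamard.
have a_cvg : mx_cvg F (fun x => at_ X y delta (u x)) (at_ X y delta t).
  by apply: mx_cvgB; [apply: mx_cvgM _ tbeta_cvg | ]; exact: mx_cvg_cst.
have b_cvg : mx_cvg F (fun x => bt X y delta (u x)) (bt X y delta t).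
  by apply: mx_cvgB a_cvg _; exact: mx_cvgZ.
have c_cvg : mx_cvg F (fun x => ct X y delta (u x)) (ct X y delta t).
  by apply: mx_cvgM invLt_cvg _; exact: mx_cvg_hadamard.
have d_cvg : mx_cvg F (fun x => dt X y delta (u x)) (dt X y delta t).
  by apply: mx_cvgM _ (mx_cvg_hadamard ut c_cvg); exact: mx_cvg_cst.
by apply: mx_cvgB; apply: mx_cvgZ; apply: mx_cvg_hadamard => //; exact: mx_cvgB.
Qed.

End ridge.

Theorem proposition1 (R : realType) (n p : nat) (hn : (0 < n)%N) (hp : (0 < p)%N)
  (X : 'M[R]_(n, p)) (y : 'cV[R]_n) (delta : R) (hdelta : 0 < delta)
  (j : 'I_p) (t : 'cV[R]_p)
  (ht : forall i : 'I_p, i != j -> 0 <= t i 0 < 1) :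
  (fun s : R => zetat X y delta (set_coord t j s) j 0) x @[x --> 0^'+] --> 0.
Proof.
pose u := set_coord t j.
have u_cvg : mx_cvg 0^'+ u (u 0).
  move=> i l; rewrite mxE; under eq_cvg do rewrite mxE.
  by case: eqP => _; [apply: cvg_at_right_filter; exact: cvg_id | exact: cvg_cst].
have u0_j : u 0 j 0 = 0 by rewrite mxE eqxx.
have Lt_u0_unit : Lt X delta (u 0) \in unitmx.
  apply: Lt_unit => // i; rewrite mxE.
  by case: eqP => [_ | /eqP /ht //]; rewrite lexx ltr01.
have zeta_cvg : mx_cvg 0^'+ (fun s => zetat X y delta (u s)) (zetat X y delta (u 0)).
  exact: zetat_cvg.
rewrite -[l in _ --> l](zetat_coord0 y u0_j Lt_u0_unit).
exact: zeta_cvg.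
Qed.
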